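(* Let $\alpha>1$. The dynamic broadcast range-assignment problem in $\mathbb{R}^2$ with distance-power gradient $\alpha$ does not admit a stable approximation scheme (SAS).
   Context: A range assignment $\rho$ on a finite set $P\subset\mathbb{R}^2$ containing a source $s$ induces a directed graph with edge $(p,q)$ iff the Euclidean distance $|pq|\le\rho(p)$; it is feasible if the graph contains an arborescence rooted at $s$ spanning $P$; its cost is $\sum_p\rho(p)^\alpha$; $\mathrm{OPT}(P)$ is the minimum cost. In the dynamic version points other than $s$ are inserted and deleted; an update algorithm outputs a feasible assignment for the new set; a point not in the current set has range $0$. It is $k$-stable if each update modifies at most $k$ ranges. A SAS is an update algorithm that for every fixed $\varepsilon>0$ is $k(\varepsilon)$-stable and after every update has cost at most $(1+\varepsilon)\mathrm{OPT}$, with $k(\varepsilon)$ depending only on $\varepsilon$, not on $|P|$. *)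

From Stdlib Require Import Reals List.
Import ListNotations.
Open Scope R_scope.

Definition point : Type := (R * R)%type.

Definition dist (p q : point) : R :=
  sqrt ((fst p - fst q) ^ 2 + (snd p - snd q) ^ 2).

Definition point_eq_dec (p q : point) : {p = q} + {p <> q}.
Proof.
  destruct p as [a b], q as [c d].
  destruct (Req_EM_T a c) as [H1|H1]; destruct (Req_EM_T b d) as [H2|H2];
    subst; [left; reflexivity | right | right | right]; congruence.
Defined.

(* x ^ a for x >= 0 and real a > 0, with the convention 0 ^ a = 0. *)
Definition rpow (x a : R) : R := if Rle_dec x 0 then 0 else Rpower x a.

Definition range_assignment := point -> R.
Definition nonneg_ranges (rho : range_assignment) : Prop := forall p, 0 <= rho p.

(* Induced digraph on P: edge (p,q) iff p,q in P and |pq| <= rho p.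
   Feasible: the digraph contains an arborescence rooted at s spanning P,
   given by parent pointers [par]: every q in P other than s has its parent
   in P with an edge (par q, q), and following parents from any q in P
   reaches the root s (so the parent structure is acyclic, i.e. a tree). *)
Definition feasible (s : point) (P : list point) (rho : range_assignment) : Prop :=
  exists par : point -> point,
    (forall q, In q P -> q <> s -> In (par q) P /\ dist (par q) q <= rho (par q)) /\
    (forall q, In q P -> exists n : nat, Nat.iter n par q = s).

(* Cost sum_{p in P} rho(p)^alpha (P is duplicate-free by construction). *)
Definition cost (alpha : R) (P : list point) (rho : range_assignment) : R :=
  fold_right (fun p acc => rpow (rho p) alpha + acc) 0 P.

(* cost(rho) <= c * OPT(P), OPT(P) being the infimum of the costs of
   feasible range assignments for P. *)
Definition within_factor (alpha c : R) (s : point) (P : list point)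
  (rho : range_assignment) : Prop :=
  forall rho', nonneg_ranges rho' -> feasible s P rho' ->
    cost alpha P rho <= c * cost alpha P rho'.

Inductive update : Type :=
  | Ins : point -> update
  | Del : point -> update.

Definition apply_update (P : list point) (u : update) : list point :=
  match u with
  | Ins p => P ++ [p]
  | Del p => remove point_eq_dec p P
  end.

Definition applicable (s : point) (P : list point) (u : update) : Prop :=
  match u with
  | Ins p => p <> s /\ ~ In p P
  | Del p => p <> s /\ In p P
  end.

(* Histories are lists of updates, most recent first.
   The initial point set is {s}. *)
Fixpoint curset (s : point) (h : list update) : list point :=
  match h with
  | [] => [s]
  | u :: h' => apply_update (curset s h') u
  end.

Fixpoint valid_history (s : point) (h : list update) : Prop :=
  match h with
  | [] => True
  | u :: h' => valid_history s h' /\ applicable s (curset s h') u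
  end.

(* An (online, deterministic) update algorithm: given the source s and the
   history of updates so far, it outputs the current range assignment. *)
Definition algorithm := point -> list update -> range_assignment.

Definition correct_algorithm (A : algorithm) : Prop :=
  forall s h, valid_history s h ->
    nonneg_ranges (A s h) /\
    feasible s (curset s h) (A s h) /\
    (forall p, ~ In p (curset s h) -> A s h p = 0).

Definition k_stable (k : nat) (A : algorithm) : Prop :=
  forall s u h, valid_history s (u :: h) ->
    exists L : list point, (length L <= k)%nat /\
      forall p, A s (u :: h) p <> A s h p -> In p L.

Definition approx (alpha eps : R) (A : algorithm) : Prop :=
  forall s h, valid_history s h ->
    within_factor alpha (1 + eps) s (curset s h) (A s h).

Definition has_SAS (alpha : R) : Prop :=
  forall eps, 0 < eps ->
    exists (k : nat) (A : algorithm),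
      correct_algorithm A /\ k_stable k A /\ approx alpha eps A.

From Stdlib Require Import Reals Lra Lia List Permutation Classical ClassicalDescription FinFun.
Import ListNotations.
Open Scope R_scope.

(* The source sits at the origin, and a chain of [m] unit gaps separated by short gaps of
   length [a] starts at distance [e] on the positive axis; from the right end of the chain a
   finely sampled path runs around the source back to the axis at [(-2d, 0)], at distance [d]
   behind a relay point [(-d, 0)].  Since [2 d^alpha < e^alpha < (2d)^alpha] with room to
   spare, a near-optimal assignment never uses a range of [2d] or more.  Without the relay,
   the source pays [e^alpha] and the chain is crossed from left to right: every unit gap is
   covered from its left, and a packing argument on the line charges an extra [a] for each
   gap whose left end [od i] has range below [1].  With the relay, the source cannot afford
   [e], the chain is entered through the detour from its right end, and symmetrically each
   [od i] of range at least [1] costs an extra [a].  As [a^alpha = a/100] and [eps] is a small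
   multiple of [a], the two assignments have fewer than [m/2] exceptions together, so deleting
   the relay changes the ranges of more than [m/2] points, and [m = 2k + 2] contradicts
   [k]-stability. *)

Lemma Rpower_gt0 x a : 0 < Rpower x a.
Proof. apply exp_pos. Qed.

Lemma Rpower_ge1 x a : 1 <= x -> 0 <= a -> 1 <= Rpower x a.
Proof. intros Hx Ha. rewrite <- (Rpower_O x) by lra. apply Rle_Rpower; lra. Qed.

Lemma Rpower_pred x a : 0 < x -> Rpower x a = x * Rpower x (a - 1).
Proof.
  intros Hx. replace a with (1 + (a - 1)) at 1 by ring.
  rewrite Rpower_plus, Rpower_1 by lra. reflexivity.
Qed.

Lemma Rpower_inv_r x y : 0 < x -> 0 < y -> Rpower (Rpower x (/ y)) y = x.
Proof.
  intros Hx Hy. rewrite Rpower_mult. replace (/ y * y) with 1 by (field; lra).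
  apply Rpower_1; lra.
Qed.

Lemma rpow_ge0 x a : 0 <= rpow x a.
Proof. unfold rpow. destruct (Rle_dec x 0); [lra | apply Rlt_le, Rpower_gt0]. Qed.

Lemma rpow_Rpower x a : 0 < x -> rpow x a = Rpower x a.
Proof. intros Hx. unfold rpow. destruct (Rle_dec x 0); [lra | reflexivity]. Qed.

Lemma rpow_0_l a : rpow 0 a = 0.
Proof. unfold rpow. destruct (Rle_dec 0 0); [reflexivity | lra]. Qed.

Lemma rpow_1_l a : rpow 1 a = 1.
Proof. rewrite rpow_Rpower by lra. unfold Rpower. rewrite ln_1, Rmult_0_r. apply exp_0. Qed.

Lemma rpow_le_compat a x y : 0 <= a -> x <= y -> rpow x a <= rpow y a.
Proof.
  intros Ha Hxy. unfold rpow.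
  destruct (Rle_dec x 0), (Rle_dec y 0); try lra.
  - apply Rlt_le, Rpower_gt0.
  - apply Rle_Rpower_l; lra.
Qed.

Lemma rpow_lt_compat a x y : 0 < a -> x < y -> 0 < y -> rpow x a < rpow y a.
Proof.
  intros Ha Hxy Hy. unfold rpow.
  destruct (Rle_dec x 0), (Rle_dec y 0); try lra.
  - apply Rpower_gt0.
  - apply Rlt_Rpower_l; lra.
Qed.

Lemma rpow_ge_id a x : 1 <= a -> 1 <= x -> x <= rpow x a.
Proof.
  intros Ha Hx. rewrite rpow_Rpower by lra.
  rewrite <- (Rpower_1 x) at 1 by lra. apply Rle_Rpower; lra.
Qed.

Lemma rpow_add_ge a x y : 1 <= a -> 1 <= x -> 0 <= y -> rpow x a + y <= rpow (x + y) a.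
Proof.
  intros Ha Hx Hy. rewrite !rpow_Rpower by lra.
  rewrite (Rpower_pred x), (Rpower_pred (x + y)) by lra.
  assert (Hmono : Rpower x (a - 1) <= Rpower (x + y) (a - 1)) by (apply Rle_Rpower_l; lra).
  assert (Hge1 : 1 <= Rpower x (a - 1)) by (apply Rpower_ge1; lra).
  nra.
Qed.

Lemma le_rpow_of_le_id a s r : 1 <= a -> s <= r -> (r < 1 -> s <= 0) -> s <= rpow r a.
Proof.
  intros Ha Hsr Hsmall. destruct (Rlt_le_dec r 1) as [Hr|Hr].
  - pose proof (rpow_ge0 r a). specialize (Hsmall Hr). lra.
  - pose proof (rpow_ge_id a r Ha Hr). lra.
Qed.

Lemma rpow_le_linear a x s : 1 <= a -> 0 < x <= s -> rpow x a <= x * Rpower s (a - 1).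
Proof.
  intros Ha Hx. rewrite rpow_Rpower, Rpower_pred by lra.
  apply Rmult_le_compat_l; [lra | apply Rle_Rpower_l; lra].
Qed.

Lemma dist_sym p q : dist p q = dist q p.
Proof. unfold dist. f_equal. ring. Qed.

Lemma dist_ge0 p q : 0 <= dist p q.
Proof. apply sqrt_pos. Qed.

Lemma dist_refl p : dist p p = 0.
Proof.
  unfold dist. replace ((fst p - fst p) ^ 2 + (snd p - snd p) ^ 2) with 0 by ring.
  apply sqrt_0.
Qed.

Lemma dist_same_y x1 x2 y : dist (x1, y) (x2, y) = Rabs (x1 - x2).
Proof. unfold dist. simpl. rewrite <- sqrt_Rsqr_abs. f_equal. unfold Rsqr. ring. Qed.

Lemma dist_same_x x y1 y2 : dist (x, y1) (x, y2) = Rabs (y1 - y2).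
Proof. unfold dist. simpl. rewrite <- sqrt_Rsqr_abs. f_equal. unfold Rsqr. ring. Qed.

Lemma dist_ge_fst p q : Rabs (fst p - fst q) <= dist p q.
Proof.
  unfold dist. rewrite <- sqrt_Rsqr_abs. apply sqrt_le_1_alt.
  unfold Rsqr. simpl. pose proof (pow2_ge_0 (snd p - snd q)). nra.
Qed.

Lemma dist_ge_snd p q : Rabs (snd p - snd q) <= dist p q.
Proof.
  unfold dist. rewrite <- sqrt_Rsqr_abs. apply sqrt_le_1_alt.
  unfold Rsqr. simpl. pose proof (pow2_ge_0 (fst p - fst q)). nra.
Qed.

Lemma dist_ge_coords p q :
  fst p - fst q <= dist p q /\ fst q - fst p <= dist p q /\
  snd p - snd q <= dist p q /\ snd q - snd p <= dist p q.
Proof.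
  pose proof (dist_ge_fst p q) as Hx. pose proof (dist_ge_snd p q) as Hy.
  unfold Rabs in Hx, Hy. destruct (Rcase_abs (fst p - fst q)), (Rcase_abs (snd p - snd q)); lra.
Qed.

Definition sumR {A : Type} (l : list A) (f : A -> R) : R :=
  fold_right (fun x s => f x + s) 0 l.

Section Sums.
Context {A : Type}.
Implicit Types (l : list A) (f g : A -> R).

Lemma sumR_cons x l f : sumR (x :: l) f = f x + sumR l f.
Proof. reflexivity. Qed.

Lemma sumR_app l1 l2 f : sumR (l1 ++ l2) f = sumR l1 f + sumR l2 f.
Proof. induction l1; simpl; [ring | rewrite IHl1; ring]. Qed.

Lemma sumR_le l f g : (forall x, In x l -> f x <= g x) -> sumR l f <= sumR l g.
Proof.
  induction l as [|x l IH]; simpl; intros H; [lra|].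
  pose proof (H x (or_introl eq_refl)). pose proof (IH (fun y Hy => H y (or_intror Hy))). lra.
Qed.

Lemma sumR_ext l f g : (forall x, In x l -> f x = g x) -> sumR l f = sumR l g.
Proof.
  intros H. apply Rle_antisym; apply sumR_le; intros x Hx; rewrite H by exact Hx; lra.
Qed.

Lemma sumR_ge0 l f : (forall x, In x l -> 0 <= f x) -> 0 <= sumR l f.
Proof.
  induction l as [|x l IH]; simpl; intros H; [lra|].
  pose proof (H x (or_introl eq_refl)). pose proof (IH (fun y Hy => H y (or_intror Hy))). lra.
Qed.

Lemma sumR_eq0 l f : (forall x, In x l -> f x = 0) -> sumR l f = 0.
Proof.
  induction l as [|x l IH]; simpl; intros H; [reflexivity|].
  rewrite H, IH by (simpl; auto). ring.
Qed.

Lemma sumR_ge_term l f x :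
  (forall y, In y l -> 0 <= f y) -> In x l -> f x <= sumR l f.
Proof.
  induction l as [|y l IH]; simpl; intros H Hx; [contradiction|].
  assert (Hl : 0 <= sumR l f) by (apply sumR_ge0; auto).
  destruct Hx as [<-|Hx].
  - lra.
  - pose proof (H y (or_introl eq_refl)). pose proof (IH (fun z Hz => H z (or_intror Hz)) Hx). lra.
Qed.

Lemma sumR_plus l f g : sumR l (fun x => f x + g x) = sumR l f + sumR l g.
Proof. induction l; simpl; [ring | rewrite IHl; ring]. Qed.

Lemma sumR_scal l c f : sumR l (fun x => c * f x) = c * sumR l f.
Proof. induction l; simpl; [ring | rewrite IHl; ring]. Qed.

Lemma sumR_const l c : sumR l (fun _ => c) = INR (length l) * c.
Proof. induction l; simpl length; [simpl; ring | rewrite S_INR; simpl; rewrite IHl; ring]. Qed.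

Lemma sumR_perm l1 l2 f : Permutation l1 l2 -> sumR l1 f = sumR l2 f.
Proof. induction 1; simpl; lra. Qed.

End Sums.

Lemma sumR_swap {A B : Type} (l : list A) (l' : list B) (F : A -> B -> R) :
  sumR l (fun x => sumR l' (F x)) = sumR l' (fun y => sumR l (fun x => F x y)).
Proof.
  induction l as [|x l IH]; simpl.
  - symmetry. apply sumR_eq0. reflexivity.
  - rewrite IH. symmetry. apply (sumR_plus l' (F x)).
Qed.

Lemma cost_sumR a P rho : cost a P rho = sumR P (fun p => rpow (rho p) a).
Proof. reflexivity. Qed.

Lemma range_lt_of_cost a P rho u c : 0 <= a -> In u P -> 0 < c ->
  cost a P rho < rpow c a -> rho u < c.
Proof.
  intros Ha Hu Hc Hcost. apply Rnot_le_lt. intros Hle.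
  pose proof (rpow_le_compat a c (rho u) Ha Hle).
  assert (rpow (rho u) a <= cost a P rho)
    by (rewrite cost_sumR; apply (sumR_ge_term P (fun p => rpow (rho p) a)); auto using rpow_ge0).
  lra.
Qed.

Definition ind (P : Prop) : R := if excluded_middle_informative P then 1 else 0.

Lemma ind_true (P : Prop) : P -> ind P = 1.
Proof. unfold ind. destruct (excluded_middle_informative P); tauto. Qed.

Lemma ind_false (P : Prop) : ~ P -> ind P = 0.
Proof. unfold ind. destruct (excluded_middle_informative P); tauto. Qed.

Lemma ind_bounds (P : Prop) : 0 <= ind P <= 1.
Proof. unfold ind. destruct (excluded_middle_informative P); lra. Qed.

Lemma ind_iff (P Q : Prop) : (P <-> Q) -> ind P = ind Q.
Proof.
  intros H. destruct (classic P) as [HP|HP].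
  - rewrite !ind_true; tauto.
  - rewrite !ind_false; tauto.
Qed.

Lemma ind_range_switch (x y : R) : 1 <= ind (y < 1) + ind (1 <= x) + ind (y <> x).
Proof.
  pose proof (ind_bounds (y < 1)). pose proof (ind_bounds (1 <= x)).
  pose proof (ind_bounds (y <> x)).
  destruct (Rlt_le_dec y 1); [rewrite (ind_true (y < 1)) by lra; lra|].
  destruct (Rle_lt_dec 1 x); [rewrite (ind_true (1 <= x)) by lra; lra|].
  rewrite (ind_true (y <> x)) by lra. lra.
Qed.

Lemma sumR_ind_le_length {A B : Type} (l : list A) (P : A -> Prop) (f : A -> B) (L : list B) :
  NoDup l -> (forall x y, In x l -> In y l -> f x = f y -> x = y) ->
  (forall x, In x l -> P x -> In (f x) L) ->
  sumR l (fun x => ind (P x)) <= INR (length L).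
Proof.
  set (dec := fun u v : B => excluded_middle_informative (u = v)).
  revert L. induction l as [|x l IH]; intros L Hnd Hinj Hin; simpl; [apply pos_INR|].
  inversion Hnd as [|? ? Hx Hnd']; subst.
  destruct (classic (P x)) as [HP|HP].
  - rewrite ind_true by exact HP.
    assert (Hrem : (S (length (remove dec (f x) L)) <= length L)%nat)
      by (apply remove_length_lt, Hin; simpl; auto).
    apply le_INR in Hrem. rewrite S_INR in Hrem.
    enough (sumR l (fun y => ind (P y)) <= INR (length (remove dec (f x) L))) by lra.
    apply IH; auto.
    + intros y z Hy Hz. apply Hinj; simpl; auto.
    + intros y Hy HPy. apply in_in_remove.
      * intros E. apply Hx. rewrite (Hinj y x) in Hy; simpl; auto.
      * apply Hin; simpl; auto.
  - rewrite ind_false by exact HP.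
    pose proof (IH L Hnd' (fun y z Hy Hz => Hinj y z (or_intror Hy) (or_intror Hz))
                  (fun y Hy => Hin y (or_intror Hy))). lra.
Qed.

(** * Feasible assignments and paths *)

Lemma feasible_cut s P rho (S : point -> Prop) q0 :
  feasible s P rho -> S s -> In q0 P -> ~ S q0 ->
  exists u q, In u P /\ S u /\ In q P /\ ~ S q /\ dist u q <= rho u.
Proof.
  intros [par [Hpar Hroot]] Hs Hq0 HSq0.
  destruct (Hroot q0 Hq0) as [n Hn].
  revert q0 Hq0 HSq0 Hn. induction n as [|n IH]; intros q Hq HSq Hn.
  - simpl in Hn. subst q. contradiction.
  - rewrite Nat.iter_succ_r in Hn.
    assert (Hne : q <> s) by (intros ->; contradiction).
    destruct (Hpar q Hq Hne) as [Hp Hd].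
    destruct (classic (S (par q))) as [HS|HS].
    + exists (par q), q. auto.
    + exact (IH (par q) Hp HS Hn).
Qed.

Lemma feasible_ext s P rho rho' :
  (forall u, In u P -> rho u = rho' u) -> feasible s P rho -> feasible s P rho'.
Proof.
  intros Heq [par [Hpar Hroot]]. exists par. split; [|exact Hroot].
  intros q Hq Hne. destruct (Hpar q Hq Hne) as [Hp Hd]. rewrite <- Heq by exact Hp. auto.
Qed.

Lemma feasible_same_points s P P' rho :
  (forall q, In q P <-> In q P') -> feasible s P rho -> feasible s P' rho.
Proof.
  intros Heq [par [Hpar Hroot]]. exists par. split.
  - intros q Hq Hne. destruct (Hpar q (proj2 (Heq q) Hq) Hne). split; [apply Heq|]; auto.
  - intros q Hq. apply Hroot, Heq, Hq.
Qed.

Lemma feasible_cons_root x y P rho :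
  In y P -> dist x y <= rho x -> feasible y P rho -> feasible x (x :: P) rho.
Proof.
  intros Hy Hxy [par [Hpar Hroot]].
  set (par' := fun q => if point_eq_dec q y then x else par q).
  exists par'. split.
  - intros q Hq Hne. unfold par'. destruct (point_eq_dec q y) as [->|Hqy].
    + simpl; auto.
    + destruct Hq as [->|Hq]; [contradiction|].
      destruct (Hpar q Hq Hqy). simpl; auto.
  - assert (Hreach : forall n q, Nat.iter n par q = y -> exists n', Nat.iter n' par' q = x).
    { induction n as [|n IH]; intros q Hn.
      - exists 1%nat. simpl in *. subst q. unfold par'. destruct (point_eq_dec y y); congruence.
      - destruct (point_eq_dec q y) as [->|Hqy].
        + exists 1%nat. simpl. unfold par'. destruct (point_eq_dec y y); congruence.
        + rewrite Nat.iter_succ_r in Hn. destruct (IH (par q) Hn) as [n' Hn'].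
          exists (S n'). rewrite Nat.iter_succ_r. unfold par' at 2.
          destruct (point_eq_dec q y); [contradiction | exact Hn']. }
    intros q [->|Hq].
    + exists O. reflexivity.
    + destruct (Hroot q Hq) as [n Hn]. exact (Hreach n q Hn).
Qed.

Fixpoint path_ranges (l : list point) : range_assignment :=
  match l with
  | x :: ((y :: _) as l') => fun u => if point_eq_dec u x then dist x y else path_ranges l' u
  | _ => fun _ => 0
  end.

Fixpoint path_cost (alpha : R) (x : point) (l : list point) : R :=
  match l with
  | [] => 0
  | y :: l' => rpow (dist x y) alpha + path_cost alpha y l'
  end.

Lemma path_ranges_nonneg l : nonneg_ranges (path_ranges l).
Proof.
  induction l as [|x [|y l] IH]; intros u; simpl; try lra.
  destruct (point_eq_dec u x); [apply dist_ge0 | apply IH].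
Qed.

Lemma path_ranges_cons x y l u :
  u <> x -> path_ranges (x :: y :: l) u = path_ranges (y :: l) u.
Proof. intros Hne. simpl. destruct (point_eq_dec u x); [contradiction | reflexivity]. Qed.

Lemma feasible_path x l : NoDup (x :: l) -> feasible x (x :: l) (path_ranges (x :: l)).
Proof.
  revert x. induction l as [|y l IH]; intros x Hnd.
  - exists (fun q => q). split.
    + intros q [->|[]] Hne. contradiction.
    + intros q [->|[]]. exists O. reflexivity.
  - inversion Hnd as [|? ? Hx Hnd']; subst.
    apply feasible_cons_root with y; [simpl; auto | |].
    + simpl. destruct (point_eq_dec x x); [lra | contradiction].
    + apply (feasible_ext y (y :: l) (path_ranges (y :: l))); [|exact (IH y Hnd')].
      intros u Hu. symmetry. apply path_ranges_cons. intros ->. contradiction.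
Qed.

Lemma cost_path_ranges a x l :
  NoDup (x :: l) -> cost a (x :: l) (path_ranges (x :: l)) = path_cost a x l.
Proof.
  revert x. induction l as [|y l IH]; intros x Hnd.
  - simpl. rewrite rpow_0_l. ring.
  - inversion Hnd as [|? ? Hx Hnd']; subst.
    cbn [path_cost]. rewrite <- (IH y Hnd'), !cost_sumR, sumR_cons. f_equal.
    + simpl. destruct (point_eq_dec x x); [reflexivity | contradiction].
    + apply sumR_ext. intros u Hu. rewrite path_ranges_cons; [reflexivity|].
      intros ->. contradiction.
Qed.

Lemma last_cons_default {A : Type} (x y : A) l : last (y :: l) x = last l y.
Proof.
  revert x y. induction l as [|z l IH]; intros x y; [reflexivity|].
  change (last (z :: l) x = last (z :: l) y). rewrite !IH. reflexivity.
Qed.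

Lemma path_cost_app a x l1 l2 :
  path_cost a x (l1 ++ l2) = path_cost a x l1 + path_cost a (last l1 x) l2.
Proof.
  revert x. induction l1 as [|y l1 IH]; intros x.
  - simpl. ring.
  - cbn [path_cost app]. rewrite IH, last_cons_default. ring.
Qed.

Lemma path_cost_rev a x l y : path_cost a x (l ++ [y]) = path_cost a y (rev l ++ [x]).
Proof.
  revert x. induction l as [|z l IH]; intros x; simpl.
  - rewrite dist_sym. ring.
  - rewrite IH, (path_cost_app a y (rev l ++ [z]) [x]), last_last. simpl.
    rewrite dist_sym. ring.
Qed.

Lemma curset_insertions s l : curset s (map Ins (rev l)) = s :: l.
Proof.
  induction l as [|x l IH] using rev_ind; [reflexivity|].
  rewrite rev_app_distr. simpl. rewrite IH. reflexivity.
Qed.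

Lemma valid_insertions s l : NoDup (s :: l) -> valid_history s (map Ins (rev l)).
Proof.
  induction l as [|x l IH] using rev_ind; intros Hnd; [exact I|].
  rewrite app_comm_cons in Hnd.
  rewrite rev_app_distr. simpl. split.
  - apply IH. exact (NoDup_app_remove_r _ _ Hnd).
  - rewrite curset_insertions. apply NoDup_remove_2 in Hnd. rewrite app_nil_r in Hnd.
    split; [intros ->; apply Hnd; simpl; auto | exact Hnd].
Qed.

(** * Packing unit gaps on a line *)

(* Gap [i] is the unit interval [[gap_lo b a i, gap_lo b a i + 1]]; consecutive gaps are
   [a] apart. *)
Definition gap_lo (b a : R) (i : nat) : R := b + INR i * (1 + a).

Lemma gap_lo_S b a i : gap_lo b a (S i) = gap_lo b a i + 1 + a.
Proof. unfold gap_lo. rewrite S_INR. ring. Qed.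

Definition right_weight (b a x r : R) (i : nat) : R :=
  ind (x <= gap_lo b a i /\ gap_lo b a i + 1 <= x + r) * (1 + a * ind (x <> gap_lo b a i)).

Definition left_weight (b a x r : R) (i : nat) : R :=
  ind (gap_lo b a i + 1 <= x /\ x - r <= gap_lo b a i) * (1 + a * ind (x <> gap_lo b a i + 1)).

(* The gaps inside [[x, x + r]] take length [1] each, and [a] more each unless the gap
   starts at [x]. *)
Lemma right_weight_sum_le b a x r m : 0 < a -> 0 <= r ->
  (forall i, (i < m)%nat -> x <= gap_lo b a i -> x = gap_lo b a i \/ x + a <= gap_lo b a i) ->
  sumR (seq 0 m) (right_weight b a x r) <= r.
Proof.
  intros Ha Hr Hgrid.
  assert (Hinv : forall k, (k <= m)%nat ->
            sumR (seq 0 k) (right_weight b a x r)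
            <= Rmax 0 (Rmin (x + r) (gap_lo b a k - a) - x)).
  { induction k as [|k IH]; intros Hk; [apply Rmax_l|].
    specialize (IH ltac:(lia)).
    rewrite seq_S, sumR_app, gap_lo_S. simpl sumR.
    set (s := sumR (seq 0 k) _) in *. unfold right_weight.
    destruct (classic (x <= gap_lo b a k /\ gap_lo b a k + 1 <= x + r)) as [Hin|Hout].
    - rewrite ind_true by exact Hin.
      destruct (Hgrid k ltac:(lia) (proj1 Hin)) as [Hx|Hx];
        [rewrite ind_false by tauto | rewrite ind_true by lra];
        revert IH; unfold Rmax, Rmin; repeat destruct Rle_dec; lra.
    - rewrite ind_false by exact Hout.
      revert IH; unfold Rmax, Rmin; repeat destruct Rle_dec; lra. }
  pose proof (Hinv m (le_n m)) as Hall. revert Hall.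
  unfold Rmax, Rmin; repeat destruct Rle_dec; lra.
Qed.

Lemma left_weight_sum_le b a x r m : 0 < a -> 0 <= r ->
  (forall i, (i < m)%nat -> gap_lo b a i + 1 <= x ->
     x = gap_lo b a i + 1 \/ gap_lo b a i + 1 + a <= x) ->
  sumR (seq 0 m) (left_weight b a x r) <= r.
Proof.
  intros Ha Hr Hgrid.
  assert (Hinv : forall k, (k <= m)%nat ->
            sumR (seq 0 k) (left_weight b a x r)
            <= Rmax 0 (Rmin x (gap_lo b a k) - (x - r))).
  { induction k as [|k IH]; intros Hk; [apply Rmax_l|].
    specialize (IH ltac:(lia)).
    rewrite seq_S, sumR_app, gap_lo_S. simpl sumR.
    set (s := sumR (seq 0 k) _) in *. unfold left_weight.
    destruct (classic (gap_lo b a k + 1 <= x /\ x - r <= gap_lo b a k)) as [Hin|Hout].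
    - rewrite ind_true by exact Hin.
      destruct (Hgrid k ltac:(lia) (proj1 Hin)) as [Hx|Hx];
        [rewrite ind_false by tauto | rewrite ind_true by lra];
        revert IH; unfold Rmax, Rmin; repeat destruct Rle_dec; lra.
    - rewrite ind_false by exact Hout.
      revert IH; unfold Rmax, Rmin; repeat destruct Rle_dec; lra. }
  pose proof (Hinv m (le_n m)) as Hall. revert Hall.
  unfold Rmax, Rmin; repeat destruct Rle_dec; lra.
Qed.

Lemma right_weight_small b a x r i : r < 1 -> right_weight b a x r i = 0.
Proof. intros Hr. unfold right_weight. rewrite ind_false by (intros [? ?]; lra). ring. Qed.

Lemma ind_weight_ge0 (P Q : Prop) a : 0 <= a -> 0 <= ind P * (1 + a * ind Q).
Proof.
  intros Ha. pose proof (ind_bounds P). pose proof (ind_bounds Q).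
  apply Rmult_le_pos; [lra|]. pose proof (Rmult_le_pos a (ind Q) Ha (proj1 H0)). lra.
Qed.

Lemma right_weight_ge0 b a x r i : 0 < a -> 0 <= right_weight b a x r i.
Proof. intros Ha. apply ind_weight_ge0. lra. Qed.

Definition lerp (p q : point) (t : R) : point :=
  (fst p + t * (fst q - fst p), snd p + t * (snd q - snd p)).

Definition segment (p q : point) (n : nat) : list point :=
  map (fun j => lerp p q (INR j / INR n)) (seq 1 n).

Lemma dist_lerp p q s t : dist (lerp p q s) (lerp p q t) = Rabs (s - t) * dist p q.
Proof.
  unfold dist, lerp. simpl. rewrite <- sqrt_Rsqr_abs, <- sqrt_mult_alt by apply Rle_0_sqr.
  f_equal. unfold Rsqr. ring.
Qed.

Lemma lerp_inj p q s t : p <> q -> lerp p q s = lerp p q t -> s = t.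
Proof.
  destruct p as [px py], q as [qx qy]. unfold lerp. simpl. intros Hpq E.
  injection E as Ex Ey.
  destruct (Req_dec px qx) as [->|Hx].
  - destruct (Req_dec py qy) as [->|Hy]; [contradiction|].
    apply (Rmult_eq_reg_r (qy - py)); [lra | intros H; apply Hy; lra].
  - apply (Rmult_eq_reg_r (qx - px)); [lra | intros H; apply Hx; lra].
Qed.

Lemma in_segment p q n x : In x (segment p q n) -> exists t, 0 < t <= 1 /\ x = lerp p q t.
Proof.
  unfold segment. rewrite in_map_iff. intros [j [<- Hj]]. apply in_seq in Hj.
  exists (INR j / INR n).
  assert (1 <= INR j) by (apply (le_INR 1); lia).
  assert (INR j <= INR n) by (apply le_INR; lia).
  split; [|reflexivity]. split.
  - apply Rdiv_lt_0_compat; lra.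
  - apply (Rmult_le_reg_r (INR n)); [lra|].
    unfold Rdiv. rewrite Rmult_assoc, Rinv_l, Rmult_1_r, Rmult_1_l by lra. lra.
Qed.

Lemma NoDup_segment p q n : p <> q -> NoDup (segment p q n).
Proof.
  intros Hpq. destruct n as [|n]; [constructor|].
  unfold segment. apply Injective_map_NoDup; [|apply seq_NoDup].
  intros i j E. apply lerp_inj in E; [|exact Hpq].
  assert (0 < INR (S n)) by (apply lt_0_INR; lia).
  apply INR_eq. unfold Rdiv in E. apply Rmult_eq_reg_r in E; [exact E|].
  apply Rinv_neq_0_compat. lra.
Qed.

Lemma last_segment p q n : (1 <= n)%nat -> last (segment p q n) p = q.
Proof.
  intros Hn. destruct n as [|n]; [lia|]. unfold segment.
  rewrite seq_S, map_app. cbn [map]. rewrite last_last. replace (1 + n)%nat with (S n) by lia.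
  assert (0 < INR (S n)) by (apply lt_0_INR; lia).
  unfold lerp. rewrite Rdiv_diag by lra. destruct q. simpl. f_equal; ring.
Qed.

Lemma path_cost_segment a p q n : (1 <= n)%nat ->
  path_cost a p (segment p q n) = INR n * rpow (dist p q / INR n) a.
Proof.
  intros Hn. assert (HnR : 0 < INR n) by (apply lt_0_INR; lia).
  assert (Hstep : forall j k, path_cost a (lerp p q (INR j / INR n))
             (map (fun j => lerp p q (INR j / INR n)) (seq (S j) k))
           = INR k * rpow (dist p q / INR n) a).
  { intros j k. revert j. induction k as [|k IH]; intros j; cbn [seq map path_cost].
    { simpl. ring. }
    rewrite IH, dist_lerp, (S_INR j), (S_INR k).
    replace (INR j / INR n - (INR j + 1) / INR n) with (- / INR n) by (field; lra).
    rewrite Rabs_Ropp, Rabs_pos_eq by (apply Rlt_le, Rinv_0_lt_compat; lra).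
    replace (/ INR n * dist p q) with (dist p q / INR n) by (unfold Rdiv; ring). ring. }
  unfold segment. rewrite <- (Hstep O n). f_equal.
  unfold lerp. rewrite INR_0. destruct p. simpl. f_equal; field; lra.
Qed.

(** * The hard instance *)

Lemma nat_INR_cases (i j : nat) :
  INR j + 1 <= INR i \/ j = i \/ INR i + 1 = INR j \/ INR i + 2 <= INR j.
Proof.
  destruct (Nat.lt_trichotomy j i) as [H|[H|H]].
  - left. rewrite <- S_INR. apply le_INR. lia.
  - right; left. exact H.
  - destruct (Nat.eq_dec j (S i)) as [->|Hne].
    + right; right; left. rewrite S_INR. reflexivity.
    + right; right; right. replace 2 with (INR 2) by reflexivity.
      rewrite <- plus_INR. apply le_INR. lia.
Qed.

Section Construction.

Variables (alpha a e d : R) (m n : nat).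
Hypotheses (Halpha : 1 < alpha) (Ha0 : 0 < a) (Ha1 : a < 1)
  (Hd1 : 1 <= d) (Hde : d <= e) (He2d : e < 2 * d) (Hn : (1 <= n)%nat).

Definition src : point := (0, 0).
Definition relay : point := (- d, 0).

(* The chain on the positive axis: [ev j] and [od j] are [a] apart, [od j] and [ev (S j)] are
   [1] apart; the unit gaps between them are the gaps [gap_lo (e + a) a j]. *)
Definition ev (j : nat) : point := (e + INR j * (1 + a), 0).
Definition od (j : nat) : point := (e + INR j * (1 + a) + a, 0).

Local Notation lo := (gap_lo (e + a) a).

Fixpoint chain_from (j k : nat) : list point :=
  match k with
  | O => []
  | S k => od j :: ev (S j) :: chain_from (S j) k
  end.

Definition chain : list point := ev 0 :: chain_from 0 m.

Definition xR : R := e + INR m * (1 + a) + a.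
Definition corner1 : point := (xR, 2 * d).
Definition corner2 : point := (- (2 * d), 2 * d).
Definition corner3 : point := (- (2 * d), 0).

(* A finely sampled detour from the right end [od m] of the chain, around the source, back
   to the axis at distance [d] behind the relay. *)
Definition ring : list point :=
  od m :: segment (od m) corner1 n ++ segment corner1 corner2 n ++ segment corner2 corner3 n.

Definition track : list point := chain ++ ring.
Definition with_relay : list point := src :: relay :: track.
Definition without_relay : list point := src :: track.

Definition track_cost : R := path_cost alpha (ev 0) (chain_from 0 m ++ ring).

Lemma od_eq_gap u i : snd u = 0 -> fst u = lo i -> u = od i.
Proof.
  destruct u as [x y]. simpl. intros -> ->. unfold od, lo, gap_lo. f_equal. ring.
Qed.

Lemma gap_le_xR i : (i < m)%nat -> lo i + 1 + a <= xR.
Proof.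
  intros Hi. unfold lo, gap_lo, xR.
  assert (INR i + 1 <= INR m) by (rewrite <- S_INR; apply le_INR; lia). nra.
Qed.

Lemma gap_ge i : e + a <= lo i.
Proof. unfold lo, gap_lo. pose proof (pos_INR i). nra. Qed.

Lemma ev_vs_gap j i :
  fst (ev j) <= lo i - a \/ fst (ev j) = lo i + 1 \/ lo i + 1 + a <= fst (ev j).
Proof. unfold lo, gap_lo, ev. simpl. destruct (nat_INR_cases i j) as [H|[->|[H|H]]]; nra. Qed.

Lemma od_vs_gap j i :
  fst (od j) <= lo i - a \/ fst (od j) = lo i \/ lo i + 1 + a <= fst (od j).
Proof. unfold lo, gap_lo, od. simpl. destruct (nat_INR_cases i j) as [H|[->|[H|H]]]; nra. Qed.

Lemma in_chain_from j k q : In q (chain_from j k) ->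
  (exists i, (j < i <= j + k)%nat /\ q = ev i) \/ (exists i, (j <= i < j + k)%nat /\ q = od i).
Proof.
  revert j. induction k as [|k IH]; intros j Hq; [contradiction|].
  destruct Hq as [<-|[<-|Hq]].
  - right. exists j. split; [lia | reflexivity].
  - left. exists (S j). split; [lia | reflexivity].
  - destruct (IH (S j) Hq) as [[i [Hi ->]]|[i [Hi ->]]];
      [left | right]; exists i; split; auto; lia.
Qed.

Lemma ev_in_chain_from j k i : (j < i <= j + k)%nat -> In (ev i) (chain_from j k).
Proof.
  revert j. induction k as [|k IH]; intros j Hi; [lia|].
  destruct (Nat.eq_dec i (S j)) as [->|Hne]; [simpl; auto|].
  right; right. apply IH. lia.
Qed.

Lemma in_chain q : In q chain ->
  (exists i, (i <= m)%nat /\ q = ev i) \/ (exists i, (i < m)%nat /\ q = od i).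
Proof.
  intros [<-|Hq].
  - left. exists O. split; [lia | reflexivity].
  - destruct (in_chain_from 0 m q Hq) as [[i [Hi ->]]|[i [Hi ->]]];
      [left | right]; exists i; split; auto; lia.
Qed.

Lemma ev_in_track i : (i <= m)%nat -> In (ev i) track.
Proof.
  intros Hi. apply in_or_app. left. destruct i as [|i]; [left; reflexivity|].
  right. apply ev_in_chain_from. lia.
Qed.

Lemma chain_coords q : In q chain -> snd q = 0 /\ e <= fst q <= xR - a.
Proof.
  intros Hq. unfold xR. destruct (in_chain q Hq) as [[i [Hi ->]]|[i [Hi ->]]]; simpl;
    pose proof (pos_INR i).
  - assert (INR i <= INR m) by (apply le_INR; lia). repeat split; nra.
  - assert (INR i + 1 <= INR m) by (rewrite <- S_INR; apply le_INR; lia). repeat split; nra.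
Qed.

Lemma chain_vs_gap q i : In q chain ->
  fst q <= lo i - a \/ fst q = lo i \/ fst q = lo i + 1 \/ lo i + 1 + a <= fst q.
Proof.
  intros Hq. destruct (in_chain q Hq) as [[j [_ ->]]|[j [_ ->]]].
  - destruct (ev_vs_gap j i); tauto.
  - destruct (od_vs_gap j i); tauto.
Qed.

Lemma xR_ge : e + a <= xR.
Proof. unfold xR. pose proof (pos_INR m). nra. Qed.

Lemma in_side1 q : In q (segment (od m) corner1 n) -> fst q = xR /\ 0 < snd q <= 2 * d.
Proof.
  intros Hq. destruct (in_segment _ _ _ _ Hq) as [t [Ht ->]].
  unfold lerp, od, corner1. simpl. fold xR. split; [ring | nra].
Qed.

Lemma in_side2 q : In q (segment corner1 corner2 n) -> snd q = 2 * d /\ - (2 * d) <= fst q < xR.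
Proof.
  intros Hq. pose proof xR_ge. destruct (in_segment _ _ _ _ Hq) as [t [Ht ->]].
  unfold lerp, corner1, corner2. simpl. split; [ring | nra].
Qed.

Lemma in_side3 q : In q (segment corner2 corner3 n) -> fst q = - (2 * d) /\ 0 <= snd q < 2 * d.
Proof.
  intros Hq. destruct (in_segment _ _ _ _ Hq) as [t [Ht ->]].
  unfold lerp, corner2, corner3. simpl. split; [ring | nra].
Qed.

Lemma in_ring q : In q ring ->
  q = od m \/ (fst q = xR /\ 0 < snd q <= 2 * d) \/
  (snd q = 2 * d /\ - (2 * d) <= fst q < xR) \/ (fst q = - (2 * d) /\ 0 <= snd q < 2 * d).
Proof.
  intros [<-|Hq]; [left; reflexivity|right].
  apply in_app_or in Hq as [Hq|Hq]; [|apply in_app_or in Hq as [Hq|Hq]].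
  - left. exact (in_side1 q Hq).
  - right; left. exact (in_side2 q Hq).
  - right; right. exact (in_side3 q Hq).
Qed.

Lemma in_track q : In q track ->
  In q chain \/ (fst q = xR /\ 0 <= snd q <= 2 * d) \/
  (snd q = 2 * d /\ - (2 * d) <= fst q <= xR) \/ (fst q = - (2 * d) /\ 0 <= snd q <= 2 * d).
Proof.
  intros Hq. apply in_app_or in Hq as [Hq|Hq]; [left; exact Hq|right].
  destruct (in_ring q Hq) as [->|[H|[H|H]]]; [left; simpl; split; [reflexivity | lra] | ..]; lra.
Qed.

Lemma dist_src_track q : In q track -> e <= dist src q.
Proof.
  intros Hq. pose proof (dist_ge_coords src q) as Hd. pose proof xR_ge as HxR.
  unfold src in *. simpl in Hd.
  destruct (in_track q Hq) as [Hc|Hr]; [pose proof (chain_coords q Hc)|]; lra.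
Qed.

Lemma dist_relay_track q : In q track -> d <= dist relay q.
Proof.
  intros Hq. pose proof (dist_ge_coords relay q) as Hd. pose proof xR_ge as HxR.
  unfold relay in *. simpl in Hd.
  destruct (in_track q Hq) as [Hc|Hr]; [pose proof (chain_coords q Hc)|]; lra.
Qed.

Lemma NoDup_chain_from j k : NoDup (ev j :: chain_from j k).
Proof.
  revert j. induction k as [|k IH]; intros j.
  - repeat constructor. intros [].
  - assert (Hfar : forall q, In q (ev (S j) :: chain_from (S j) k) -> fst (od j) < fst q).
    { intros q [<-|Hq]; [unfold od, ev; cbn [fst]; rewrite S_INR; lra|].
      destruct (in_chain_from (S j) k q Hq) as [[i [Hi ->]]|[i [Hi ->]]]; unfold od, ev; cbn [fst];
        assert (INR j + 1 <= INR i) by (rewrite <- S_INR; apply le_INR; lia); nra. }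
    constructor; [|constructor; [|exact (IH (S j))]].
    + intros [E|Hq]; [apply (f_equal fst) in E; unfold ev, od in E; simpl in E; lra|].
      apply Hfar in Hq. unfold ev, od in Hq. simpl in Hq. lra.
    + intros Hq. apply Hfar in Hq. lra.
Qed.

Lemma NoDup_ring : NoDup ring.
Proof.
  pose proof xR_ge as HxR.
  assert (Hne : forall p q : point, fst p <> fst q \/ snd p <> snd q -> p <> q)
    by (intros p q [H|H] ->; contradiction).
  constructor; [|apply NoDup_app; [|apply NoDup_app|]].
  - intros Hq. apply in_app_or in Hq as [Hq|Hq]; [|apply in_app_or in Hq as [Hq|Hq]].
    + apply in_side1 in Hq. simpl in Hq. lra.
    + apply in_side2 in Hq. simpl in Hq. lra.
    + apply in_side3 in Hq. simpl in Hq. fold xR in Hq. lra.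
  - apply NoDup_segment, Hne. right. simpl. lra.
  - apply NoDup_segment, Hne. left. simpl. lra.
  - apply NoDup_segment, Hne. right. simpl. lra.
  - intros q H2 H3. apply in_side2 in H2. apply in_side3 in H3. lra.
  - intros q H1 H23. apply in_side1 in H1.
    apply in_app_or in H23 as [H2|H3]; [apply in_side2 in H2 | apply in_side3 in H3]; lra.
Qed.

Lemma NoDup_track : NoDup track.
Proof.
  apply NoDup_app; [apply NoDup_chain_from | apply NoDup_ring |].
  intros q Hc Hr. destruct (chain_coords q Hc) as [Hy Hx].
  destruct (in_ring q Hr) as [->|[H|[H|H]]]; [simpl in Hx; fold xR in Hx|..]; lra.
Qed.

Lemma NoDup_without_relay : NoDup without_relay.
Proof.
  constructor; [|exact NoDup_track].
  intros H. pose proof (dist_src_track src H) as Hd. rewrite dist_refl in Hd. lra.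
Qed.

Lemma NoDup_with_relay : NoDup with_relay.
Proof.
  constructor; [|constructor; [|exact NoDup_track]].
  - intros [E|H]; [injection E; lra|].
    pose proof (dist_src_track src H) as Hd. rewrite dist_refl in Hd. lra.
  - intros H. pose proof (dist_relay_track relay H) as Hd. rewrite dist_refl in Hd. lra.
Qed.

Lemma path_cost_chain_from j k :
  path_cost alpha (ev j) (chain_from j k) = INR k * (rpow a alpha + 1).
Proof.
  revert j. induction k as [|k IH]; intros j; [simpl; ring|].
  cbn [chain_from path_cost]. rewrite IH. unfold ev, od.
  rewrite !dist_same_y, S_INR, S_INR.
  replace (e + INR j * (1 + a) - (e + INR j * (1 + a) + a)) with (- a) by ring.
  replace (e + INR j * (1 + a) + a - (e + (INR j + 1) * (1 + a))) with (Ropp 1) by ring.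
  rewrite !Rabs_Ropp, !Rabs_pos_eq, rpow_1_l by lra. ring.
Qed.

Lemma last_chain_from j k : last (chain_from j k) (ev j) = ev (j + k).
Proof.
  revert j. induction k as [|k IH]; intros j; [rewrite Nat.add_0_r; reflexivity|].
  cbn [chain_from]. rewrite !last_cons_default, IH. f_equal. lia.
Qed.

Lemma track_cost_eq : track_cost = INR m * (rpow a alpha + 1) + rpow a alpha +
  INR n * (2 * rpow (2 * d / INR n) alpha + rpow ((xR + 2 * d) / INR n) alpha).
Proof.
  pose proof xR_ge.
  unfold track_cost, ring. rewrite path_cost_app, path_cost_chain_from, last_chain_from.
  cbn [path_cost]. rewrite !path_cost_app, !last_segment, !path_cost_segment by exact Hn.
  unfold ev, od, corner1, corner2, corner3. fold xR.
  rewrite dist_same_y, dist_same_x, dist_same_y, dist_same_x, Nat.add_0_l.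
  replace (e + INR m * (1 + a) - xR) with (- a) by (unfold xR; ring).
  replace (0 - 2 * d) with (- (2 * d)) by ring.
  replace (xR - - (2 * d)) with (xR + 2 * d) by ring.
  replace (2 * d - 0) with (2 * d) by ring.
  rewrite !Rabs_Ropp, !Rabs_pos_eq by lra. ring.
Qed.

Lemma dist_src_ev0 : dist src (ev 0) = e.
Proof.
  unfold src, ev. rewrite dist_same_y, INR_0.
  replace (0 - (e + 0 * (1 + a))) with (- e) by ring. rewrite Rabs_Ropp, Rabs_pos_eq; lra.
Qed.

Lemma dist_src_relay : dist src relay = d.
Proof.
  unfold src, relay. rewrite dist_same_y. replace (0 - - d) with d by ring.
  apply Rabs_pos_eq. lra.
Qed.

Lemma canonical_without_relay : exists rho, nonneg_ranges rho /\
  feasible src without_relay rho /\ cost alpha without_relay rho = rpow e alpha + track_cost.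
Proof.
  exists (path_ranges without_relay).
  split; [apply path_ranges_nonneg|]. split; [exact (feasible_path _ _ NoDup_without_relay)|].
  unfold without_relay. rewrite cost_path_ranges by exact NoDup_without_relay.
  unfold track, chain. cbn [app path_cost]. rewrite dist_src_ev0. reflexivity.
Qed.

Lemma track_snoc : exists M, chain_from 0 m ++ ring = M ++ [corner3].
Proof.
  assert (Hne : segment corner2 corner3 n <> []).
  { destruct n as [|n']; [lia|]. unfold segment. simpl. discriminate. }
  pose proof (app_removelast_last corner2 Hne) as Hs. rewrite last_segment in Hs by exact Hn.
  eexists. unfold ring. rewrite Hs, !app_comm_cons, !app_assoc. reflexivity.
Qed.

(* Walk the track backwards: source, relay, [corner3], ..., [ev 0]. *)
Lemma canonical_with_relay : exists rho, nonneg_ranges rho /\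
  feasible src with_relay rho /\ cost alpha with_relay rho = 2 * rpow d alpha + track_cost.
Proof.
  destruct track_snoc as [M HM].
  set (tour := src :: relay :: corner3 :: rev M ++ [ev 0]).
  assert (Hperm : Permutation tour with_relay).
  { unfold tour, with_relay, track, chain. do 2 apply perm_skip. cbn [app]. rewrite HM.
    replace (corner3 :: rev M ++ [ev 0]) with (rev (ev 0 :: M ++ [corner3]))
      by (simpl; rewrite rev_app_distr; reflexivity).
    apply Permutation_sym, Permutation_rev. }
  assert (Hnd : NoDup tour) by exact (Permutation_NoDup (Permutation_sym Hperm) NoDup_with_relay).
  exists (path_ranges tour). split; [apply path_ranges_nonneg|]. split.
  - apply (feasible_same_points src tour).
    + intros q. split; apply Permutation_in; [exact Hperm | exact (Permutation_sym Hperm)].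
    + exact (feasible_path _ _ Hnd).
  - rewrite cost_sumR, <- (sumR_perm _ _ _ Hperm), <- cost_sumR.
    unfold tour. rewrite cost_path_ranges by exact Hnd.
    cbn [path_cost]. rewrite <- path_cost_rev, <- HM. fold track_cost.
    rewrite dist_src_relay. unfold relay, corner3. rewrite dist_same_y.
    replace (- d - - (2 * d)) with d by ring. rewrite Rabs_pos_eq by lra. ring.
Qed.

Lemma fst_ev_S_gap i : fst (ev (S i)) = lo i + 1.
Proof. unfold ev, gap_lo. cbn [fst]. rewrite S_INR. ring. Qed.

Lemma ev0_neq_src : ev 0 <> src.
Proof. intros E. pose proof dist_src_ev0 as H. rewrite E, dist_refl in H. lra. Qed.

Lemma src_range_without_relay rho : feasible src without_relay rho -> e <= rho src.
Proof.
  intros Hf.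
  destruct (feasible_cut src without_relay rho (fun q => q = src) (ev 0) Hf)
    as (u & q & Hu & -> & Hq & Hqs & Hd); [reflexivity | right; apply ev_in_track; lia
                                            | exact ev0_neq_src |].
  destruct Hq as [<-|Hq]; [contradiction|]. pose proof (dist_src_track q Hq). lra.
Qed.

Lemma relay_ranges rho :
  feasible src with_relay rho -> rho src < e -> d <= rho src /\ d <= rho relay.
Proof.
  intros Hf Hsrc. split.
  - destruct (feasible_cut src with_relay rho (fun q => q = src) relay Hf)
      as (u & q & Hu & -> & Hq & Hqs & Hd); [reflexivity | right; left; reflexivity
                                              | intros E; injection E; lra |].
    destruct Hq as [<-|[<-|Hq]]; [contradiction| |].
    + rewrite dist_src_relay in Hd. lra.
    + pose proof (dist_src_track q Hq). lra.
  - destruct (feasible_cut src with_relay rho (fun q => q = src \/ q = relay) (ev 0) Hf)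
      as (u & q & Hu & Hus & Hq & Hqs & Hd);
      [left; reflexivity | right; right; apply ev_in_track; lia
      | intros [E|E]; [exact (ev0_neq_src E) | injection E; lra] |].
    destruct Hq as [<-|[<-|Hq]]; [tauto | tauto|].
    destruct Hus as [-> | ->].
    + pose proof (dist_src_track q Hq). lra.
    + pose proof (dist_relay_track q Hq). lra.
Qed.

Lemma without_relay_gap_covered rho i :
  feasible src without_relay rho -> (forall u, In u without_relay -> rho u < 2 * d) ->
  (i < m)%nat ->
  exists u, In u without_relay /\ snd u = 0 /\ 0 <= fst u <= lo i /\
    lo i + 1 <= fst u + rho u /\ (rho (od i) < 1 -> fst u <> lo i).
Proof.
  intros Hf Hlt Hi. pose proof (gap_ge i) as Hlo.
  destruct (feasible_cut src without_relay rho (fun q => snd q = 0 /\ 0 <= fst q <= lo i)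
              (ev (S i)) Hf) as (u & q & Hu & Hpu & Hq & Hpq & Hd).
  { simpl. lra. }
  { right. apply ev_in_track. lia. }
  { rewrite fst_ev_S_gap. lra. }
  pose proof (Hlt u Hu) as Hsmall. pose proof (dist_ge_coords u q) as Hc.
  assert (Hreach : lo i + 1 <= fst u + rho u).
  { destruct Hq as [<-|Hq]; [simpl in Hpq; lra|].
    destruct (in_track q Hq) as [Hch|[Hr|[Hr|Hr]]].
    - destruct (chain_coords q Hch). destruct (chain_vs_gap q i Hch); lra.
    - pose proof (gap_le_xR i Hi). lra.
    - lra.
    - lra. }
  exists u. repeat split; try tauto.
  intros Hod E. assert (u = od i) as -> by (apply od_eq_gap; tauto). lra.
Qed.

Definition forward_weight (rho : range_assignment) (u : point) (i : nat) : R :=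
  ind (snd u = 0 /\ 0 <= fst u) * right_weight (e + a) a (fst u) (rho u) i.

Lemma forward_weight_ge0 rho u i : 0 <= forward_weight rho u i.
Proof.
  unfold forward_weight. pose proof (ind_bounds (snd u = 0 /\ 0 <= fst u)).
  pose proof (right_weight_ge0 (e + a) a (fst u) (rho u) i Ha0). nra.
Qed.

Lemma forward_weight_track rho u : nonneg_ranges rho -> In u track ->
  sumR (seq 0 m) (forward_weight rho u) <= rpow (rho u) alpha.
Proof.
  intros Hnn Hu. unfold forward_weight. rewrite sumR_scal.
  destruct (classic (snd u = 0 /\ 0 <= fst u)) as [Hax|Hax];
    [rewrite ind_true by exact Hax
    | rewrite ind_false by exact Hax; rewrite Rmult_0_l; apply rpow_ge0].
  rewrite Rmult_1_l. apply le_rpow_of_le_id; [lra| |].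
  - apply right_weight_sum_le; [exact Ha0 | apply Hnn|].
    intros i Hi Hle. pose proof (gap_le_xR i Hi).
    destruct (in_track u Hu) as [Hch|[Hr|[Hr|Hr]]]; [|lra..].
    destruct (chain_vs_gap u i Hch); [right | left | ..]; lra.
  - intros Hr. rewrite sumR_eq0; [lra|]. intros i _. apply right_weight_small, Hr.
Qed.

Lemma forward_weight_src rho : e <= rho src ->
  sumR (seq 0 m) (forward_weight rho src) <= rpow (rho src) alpha - rpow e alpha.
Proof.
  intros Hsrc. unfold forward_weight. rewrite sumR_scal, ind_true, Rmult_1_l by (simpl; lra).
  rewrite (sumR_ext _ _ (right_weight (e + a) a e (rho src - e))).
  - pose proof (rpow_add_ge alpha e (rho src - e) ltac:(lra) ltac:(lra) ltac:(lra)) as Hpow.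
    replace (e + (rho src - e)) with (rho src) in Hpow by ring.
    enough (sumR (seq 0 m) (right_weight (e + a) a e (rho src - e)) <= rho src - e) by lra.
    apply right_weight_sum_le; [exact Ha0 | lra|].
    intros i _ _. right. pose proof (gap_ge i). lra.
  - intros i _. pose proof (gap_ge i). unfold right_weight. simpl.
    rewrite (ind_true (0 <> lo i)), (ind_true (e <> lo i)) by lra.
    f_equal. apply ind_iff. lra.
Qed.

Lemma forward_weight_gap rho i :
  feasible src without_relay rho -> (forall u, In u without_relay -> rho u < 2 * d) ->
  (i < m)%nat ->
  1 + a * ind (rho (od i) < 1) <= sumR without_relay (fun u => forward_weight rho u i).
Proof.
  intros Hf Hlt Hi.
  destruct (without_relay_gap_covered rho i Hf Hlt Hi) as (u & Hu & Hy & Hx & Hr & Hod).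
  eapply Rle_trans; [|apply (sumR_ge_term _ _ u); [intros; apply forward_weight_ge0 | exact Hu]].
  unfold forward_weight, right_weight.
  rewrite (ind_true (snd u = 0 /\ 0 <= fst u)), (ind_true (fst u <= lo i /\ _)) by (split; lra).
  destruct (classic (rho (od i) < 1)) as [Hs|Hs].
  - rewrite !ind_true by auto. lra.
  - rewrite ind_false by exact Hs. pose proof (ind_bounds (fst u <> lo i)). nra.
Qed.

Lemma cost_without_relay_ge rho : nonneg_ranges rho -> feasible src without_relay rho ->
  (forall u, In u without_relay -> rho u < 2 * d) ->
  rpow e alpha + sumR (seq 0 m) (fun i => 1 + a * ind (rho (od i) < 1))
  <= cost alpha without_relay rho.
Proof.
  intros Hnn Hf Hlt.
  assert (Hgaps : sumR (seq 0 m) (fun i => 1 + a * ind (rho (od i) < 1))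
                  <= sumR (seq 0 m)
                       (fun i => sumR without_relay (fun u => forward_weight rho u i))).
  { apply sumR_le. intros i Hi. apply in_seq in Hi. apply forward_weight_gap; auto; lia. }
  rewrite <- sumR_swap in Hgaps. unfold without_relay in Hgaps. rewrite sumR_cons in Hgaps.
  assert (Htrack : sumR track (fun u => sumR (seq 0 m) (forward_weight rho u))
                   <= sumR track (fun u => rpow (rho u) alpha))
    by (apply sumR_le; intros; apply forward_weight_track; auto).
  pose proof (forward_weight_src rho (src_range_without_relay rho Hf)).
  rewrite cost_sumR. unfold without_relay. rewrite sumR_cons. lra.
Qed.

Definition backward_cover (rho : range_assignment) (u : point) (i : nat) : Prop :=
  (snd u = 0 \/ fst u = xR) /\ e <= fst u /\ lo i + 1 <= fst u /\ fst u - rho u <= lo i.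

Lemma with_relay_gap_covered rho i :
  feasible src with_relay rho -> (forall u, In u with_relay -> rho u < 2 * d) ->
  rho src < e -> (i < m)%nat -> exists u, In u track /\ backward_cover rho u i.
Proof.
  intros Hf Hlt Hsrc Hi. pose proof (gap_ge i) as Hlo.
  destruct (feasible_cut src with_relay rho (fun q => ~ (snd q = 0 /\ e <= fst q <= lo i))
              (ev 0) Hf) as (u & q & Hu & Hpu & Hq & Hpq & Hd).
  { simpl. lra. }
  { right; right. apply ev_in_track. lia. }
  { simpl. rewrite Rmult_0_l. lra. }
  apply NNPP in Hpq. pose proof (Hlt u Hu) as Hsmall. pose proof (dist_ge_coords u q) as Hc.
  destruct Hu as [<-|[<-|Hu]]; [simpl in Hc; lra | simpl in Hc; lra |].
  exists u. split; [exact Hu|].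
  destruct (in_track u Hu) as [Hch|[Hr|[Hr|Hr]]].
  - destruct (chain_coords u Hch) as [Hy Hx].
    assert (lo i < fst u) by (apply Rnot_le_lt; intros Hle; apply Hpu; repeat split; lra).
    unfold backward_cover. repeat split; [left; exact Hy | lra | | lra].
    destruct (chain_vs_gap u i Hch); lra.
  - pose proof (gap_le_xR i Hi). pose proof xR_ge.
    unfold backward_cover. repeat split; [right | ..]; lra.
  - exfalso. lra.
  - exfalso. lra.
Qed.

Lemma backward_cover_left_weight rho u i :
  ind (backward_cover rho u i) <= left_weight (e + a) a (fst u) (rho u) i.
Proof.
  unfold left_weight. pose proof (ind_bounds (fst u <> lo i + 1)).
  destruct (classic (backward_cover rho u i)) as [Hb|Hb].
  - rewrite ind_true by exact Hb.
    rewrite ind_true by (unfold backward_cover in Hb; split; lra). nra.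
  - rewrite ind_false by exact Hb. apply ind_weight_ge0. lra.
Qed.

Lemma backward_count_track rho u : nonneg_ranges rho -> In u track ->
  sumR (seq 0 m) (fun i => ind (backward_cover rho u i)) <= rpow (rho u) alpha.
Proof.
  intros Hnn Hu.
  destruct (classic ((snd u = 0 \/ fst u = xR) /\ e <= fst u)) as [Hlow|Hlow].
  - apply le_rpow_of_le_id; [lra| |].
    + eapply Rle_trans; [apply sumR_le; intros i _; apply backward_cover_left_weight|].
      apply left_weight_sum_le; [exact Ha0 | apply Hnn|].
      intros i Hi Hle. pose proof (gap_le_xR i Hi).
      destruct (in_track u Hu) as [Hch|[Hr|[Hr|Hr]]]; [|right; lra..].
      destruct (chain_vs_gap u i Hch) as [Hg|[Hg|[Hg|Hg]]]; [exfalso.. | left | right]; lra.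
    + intros Hr. rewrite sumR_eq0; [lra|]. intros i _. apply ind_false.
      unfold backward_cover. lra.
  - rewrite sumR_eq0; [apply rpow_ge0|]. intros i _. apply ind_false.
    unfold backward_cover. tauto.
Qed.

(* [od j] is never the right end of a gap, so each gap it covers costs it [1 + a]. *)
Lemma backward_count_od rho j : nonneg_ranges rho -> (j < m)%nat ->
  sumR (seq 0 m) (fun i => ind (backward_cover rho (od j) i)) + a * ind (1 <= rho (od j))
  <= rpow (rho (od j)) alpha.
Proof.
  intros Hnn Hj. set (s := sumR (seq 0 m) (fun i => ind (backward_cover rho (od j) i))).
  assert (Hs0 : 0 <= s) by (apply sumR_ge0; intros; apply ind_bounds).
  assert (Hpack : (1 + a) * s <= rho (od j)).
  { unfold s. rewrite <- sumR_scal.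
    eapply Rle_trans;
      [|apply (left_weight_sum_le (e + a) a (fst (od j))); [exact Ha0 | apply Hnn|]].
    - apply sumR_le. intros i _. unfold left_weight.
      destruct (classic (backward_cover rho (od j) i)) as [Hb|Hb].
      + rewrite (ind_true (backward_cover _ _ _)), (ind_true (_ /\ _)), ind_true;
          [lra | intros E; destruct (od_vs_gap j i); lra
          | unfold backward_cover in Hb; split; lra | exact Hb].
      + rewrite ind_false, Rmult_0_r by exact Hb. apply ind_weight_ge0. lra.
    - intros i Hi Hle. right. destruct (od_vs_gap j i); lra. }
  destruct (Rlt_le_dec (rho (od j)) 1) as [Hr|Hr].
  - rewrite ind_false by lra.
    assert (s = 0) by (apply sumR_eq0; intros i _; apply ind_false; unfold backward_cover; lra).
    pose proof (rpow_ge0 (rho (od j)) alpha). lra.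
  - rewrite ind_true by exact Hr. pose proof (rpow_ge_id alpha (rho (od j)) ltac:(lra) Hr).
    destruct (classic (exists i, In i (seq 0 m) /\ backward_cover rho (od j) i))
      as [[i [Hi Hb]]|Hnone].
    + assert (1 <= s).
      { rewrite <- (ind_true _ Hb).
        apply (sumR_ge_term _ (fun i => ind (backward_cover rho (od j) i)));
          [intros; apply ind_bounds | exact Hi]. }
      nra.
    + assert (s = 0) by (apply sumR_eq0; intros i Hi; apply ind_false; eauto).
      lra.
Qed.

Lemma backward_count_chain_from rho j k : nonneg_ranges rho -> (j + k <= m)%nat ->
  sumR (chain_from j k) (fun u => sumR (seq 0 m) (fun i => ind (backward_cover rho u i)))
  + a * sumR (seq j k) (fun i => ind (1 <= rho (od i)))
  <= sumR (chain_from j k) (fun u => rpow (rho u) alpha).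
Proof.
  intros Hnn. revert j. induction k as [|k IH]; intros j Hjk; [simpl; lra|].
  cbn [chain_from seq]. rewrite !sumR_cons.
  pose proof (backward_count_od rho j Hnn ltac:(lia)).
  pose proof (backward_count_track rho (ev (S j)) Hnn (ev_in_track (S j) ltac:(lia))).
  pose proof (IH (S j) ltac:(lia)). lra.
Qed.

Lemma cost_with_relay_ge rho : nonneg_ranges rho -> feasible src with_relay rho ->
  (forall u, In u with_relay -> rho u < 2 * d) -> rho src < e ->
  2 * rpow d alpha + sumR (seq 0 m) (fun i => 1 + a * ind (1 <= rho (od i)))
  <= cost alpha with_relay rho.
Proof.
  intros Hnn Hf Hlt Hsrc.
  destruct (relay_ranges rho Hf Hsrc) as [Hs Hr].
  pose proof (rpow_le_compat alpha d (rho src) ltac:(lra) Hs).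
  pose proof (rpow_le_compat alpha d (rho relay) ltac:(lra) Hr).
  set (c u := sumR (seq 0 m) (fun i => ind (backward_cover rho u i))).
  assert (Hgaps : sumR (seq 0 m) (fun _ => 1) <= sumR track c).
  { unfold c. rewrite sumR_swap. apply sumR_le. intros i Hi. apply in_seq in Hi.
    destruct (with_relay_gap_covered rho i Hf Hlt Hsrc ltac:(lia)) as [u [Hu Hb]].
    rewrite <- (ind_true _ Hb).
    apply (sumR_ge_term _ (fun u => ind (backward_cover rho u i)));
      [intros; apply ind_bounds | exact Hu]. }
  assert (Hchain : sumR chain c + a * sumR (seq 0 m) (fun i => ind (1 <= rho (od i)))
                   <= sumR chain (fun u => rpow (rho u) alpha)).
  { unfold chain. rewrite !sumR_cons.
    pose proof (backward_count_track rho (ev 0) Hnn (ev_in_track 0 ltac:(lia))).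
    pose proof (backward_count_chain_from rho 0 m Hnn ltac:(lia)). unfold c. lra. }
  assert (Hring : sumR ring c <= sumR ring (fun u => rpow (rho u) alpha)).
  { apply sumR_le. intros u Hu. apply backward_count_track; [exact Hnn|].
    apply in_or_app. right. exact Hu. }
  unfold track in Hgaps. rewrite sumR_app in Hgaps.
  rewrite sumR_plus, sumR_scal.
  rewrite cost_sumR. unfold with_relay, track. rewrite !sumR_cons, sumR_app. lra.
Qed.

Lemma remove_relay : remove point_eq_dec relay with_relay = without_relay.
Proof.
  unfold with_relay, without_relay. cbn [remove].
  destruct (point_eq_dec relay src) as [E|_]; [injection E; lra|].
  destruct (point_eq_dec relay relay) as [_|E]; [|contradiction].
  rewrite notin_remove; [reflexivity|].
  intros H. pose proof (dist_relay_track relay H) as Hd. rewrite dist_refl in Hd. lra.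
Qed.

Lemma od_inj i j : od i = od j -> i = j.
Proof. intros E. apply (f_equal fst) in E. unfold od in E. simpl in E. apply INR_eq. nra. Qed.

Lemma relay_deletion : exists h, valid_history src (Del relay :: h) /\
  curset src h = with_relay /\ curset src (Del relay :: h) = without_relay.
Proof.
  set (h := map Ins (rev (relay :: track))).
  assert (Hcur : curset src h = with_relay) by apply curset_insertions.
  exists h. split; [split|split; [exact Hcur|]].
  - exact (valid_insertions src _ NoDup_with_relay).
  - cbn [applicable]. rewrite Hcur. split; [intros E; injection E; lra | simpl; auto].
  - change (remove point_eq_dec relay (curset src h) = without_relay).
    rewrite Hcur. exact remove_relay.
Qed.

(* After inserting the relay and the track, delete the relay: every [od i] must switch from
   a short range (the track is walked backwards) to a range at least [1] (walked forwards),
   unless the assignment pays an extra [a] for [i] before or after the deletion. *)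
Lemma stable_update_bound (A : algorithm) (k : nat) (eps : R) :
  correct_algorithm A -> k_stable k A -> approx alpha eps A -> 0 <= eps ->
  (1 + eps) * (rpow e alpha + track_cost) < rpow (2 * d) alpha ->
  (1 + eps) * (2 * rpow d alpha + track_cost) < rpow e alpha ->
  a * (INR m - INR k)
  <= (1 + eps) * (rpow e alpha + track_cost) - rpow e alpha
     + (1 + eps) * (2 * rpow d alpha + track_cost) - 2 * rpow d alpha - 2 * INR m.
Proof.
  intros Hcorrect Hstable Happrox Heps Hbig Hsmall.
  destruct relay_deletion as (h1 & Hv2 & Hcur1 & Hcur2).
  set (h2 := Del relay :: h1) in *.
  assert (Hv1 : valid_history src h1) by exact (proj1 Hv2).
  set (r1 := A src h1). set (r2 := A src h2).
  destruct (Hcorrect src h1 Hv1) as [Hnn1 [Hf1 _]]. rewrite Hcur1 in Hf1.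
  destruct (Hcorrect src h2 Hv2) as [Hnn2 [Hf2 _]]. rewrite Hcur2 in Hf2.
  assert (Hc1 : cost alpha with_relay r1 <= (1 + eps) * (2 * rpow d alpha + track_cost)).
  { destruct canonical_with_relay as (rho & Hnn & Hf & Hcost). rewrite <- Hcost.
    specialize (Happrox src h1 Hv1). rewrite Hcur1 in Happrox. exact (Happrox rho Hnn Hf). }
  assert (Hc2 : cost alpha without_relay r2 <= (1 + eps) * (rpow e alpha + track_cost)).
  { destruct canonical_without_relay as (rho & Hnn & Hf & Hcost). rewrite <- Hcost.
    specialize (Happrox src h2 Hv2). rewrite Hcur2 in Happrox. exact (Happrox rho Hnn Hf). }
  assert (He_2d : rpow e alpha < rpow (2 * d) alpha) by (apply rpow_lt_compat; lra).
  assert (Hr2 : forall u, In u without_relay -> r2 u < 2 * d)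
    by (intros u Hu; apply (range_lt_of_cost alpha without_relay); auto; lra).
  assert (Hr1 : forall u, In u with_relay -> r1 u < 2 * d)
    by (intros u Hu; apply (range_lt_of_cost alpha with_relay); auto; lra).
  assert (Hr1src : r1 src < e)
    by (apply (range_lt_of_cost alpha with_relay); [lra | left; reflexivity | lra | lra]).
  pose proof (cost_without_relay_ge r2 Hnn2 Hf2 Hr2) as Hlb2.
  pose proof (cost_with_relay_ge r1 Hnn1 Hf1 Hr1 Hr1src) as Hlb1.
  assert (Hchanged : sumR (seq 0 m) (fun i => ind (r2 (od i) <> r1 (od i))) <= INR k).
  { destruct (Hstable src (Del relay) h1 Hv2) as [L [HL HLin]].
    eapply Rle_trans; [|apply le_INR, HL].
    apply sumR_ind_le_length with (f := od); [apply seq_NoDup | intros; apply od_inj; auto |].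
    intros i _ Hi. apply HLin. exact Hi. }
  assert (Hcover : sumR (seq 0 m) (fun _ => 1)
                   <= sumR (seq 0 m) (fun i => ind (r2 (od i) < 1) + ind (1 <= r1 (od i))
                                               + ind (r2 (od i) <> r1 (od i))))
    by (apply sumR_le; intros i _; apply ind_range_switch).
  rewrite sumR_const, length_seq, !sumR_plus in Hcover.
  rewrite !sumR_plus, !sumR_scal, sumR_const, length_seq in Hlb1, Hlb2.
  nra.
Qed.

Lemma track_cost_bounds : rpow a alpha = a / 100 -> (1 <= m)%nat ->
  INR n * rpow ((xR + 2 * d) / INR n) alpha <= a * INR m / 300 ->
  INR m <= track_cost <= INR m + 3 * a * INR m / 100.
Proof.
  intros Hra Hm Hfine. pose proof xR_ge.
  assert (HnR : 0 < INR n) by (apply lt_0_INR; lia).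
  assert (HmR : 1 <= INR m) by (apply (le_INR 1); lia).
  assert (Hside : INR n * rpow (2 * d / INR n) alpha <= INR n * rpow ((xR + 2 * d) / INR n) alpha).
  { apply Rmult_le_compat_l; [lra|]. apply rpow_le_compat; [lra|].
    apply Rmult_le_compat_r; [apply Rlt_le, Rinv_0_lt_compat; lra | lra]. }
  pose proof (rpow_ge0 (2 * d / INR n) alpha). pose proof (rpow_ge0 ((xR + 2 * d) / INR n) alpha).
  rewrite track_cost_eq, Hra. split; nra.
Qed.

End Construction.

(** * Choice of the parameters *)

Lemma exists_small_gap alpha : 1 < alpha -> exists a, 0 < a < 1 /\ rpow a alpha = a / 100.
Proof.
  intros Halpha. set (a := Rpower (/ 100) (/ (alpha - 1))).
  assert (Hpow : Rpower a (alpha - 1) = / 100) by (apply Rpower_inv_r; lra).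
  assert (Ha0 : 0 < a) by apply Rpower_gt0.
  exists a. split; [split; [exact Ha0|]|].
  - apply Rnot_le_lt. intros Ha1. pose proof (Rpower_ge1 a (alpha - 1) Ha1 ltac:(lra)). lra.
  - rewrite rpow_Rpower, Rpower_pred, Hpow by exact Ha0. field.
Qed.

(* With [b = 2 ^ (alpha - 1) > 1] and [d ^ alpha = D], take [e ^ alpha = (1 + b) D], halfway
   between [2 d ^ alpha = 2 D] and [(2 d) ^ alpha = 2 b D]. *)
Lemma exists_two_scales alpha : 1 < alpha -> exists C, 0 < C /\ forall M, 1 <= M ->
  exists d e, 1 <= d /\ d <= e /\ e < 2 * d /\ 2 * rpow d alpha + M <= rpow e alpha /\
    rpow e alpha + M <= rpow (2 * d) alpha /\ rpow e alpha <= C * M.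
Proof.
  intros Halpha. set (b := Rpower 2 (alpha - 1)).
  assert (Hb : 1 < b).
  { pose proof (Rpower_lt 2 0 (alpha - 1) ltac:(lra) ltac:(lra)). rewrite Rpower_O in H by lra.
    exact H. }
  set (K := / (b - 1) + 1).
  assert (HK : 1 < K) by (unfold K; pose proof (Rinv_0_lt_compat (b - 1) ltac:(lra)); lra).
  assert (HbK : (b - 1) * K = 1 + (b - 1)) by (unfold K; field; lra).
  exists ((1 + b) * K). split; [nra|]. intros M HM.
  set (D := K * M). assert (HD : 1 <= D) by (unfold D; nra).
  set (d := Rpower D (/ alpha)). set (e := Rpower ((1 + b) * D) (/ alpha)).
  assert (Hd : rpow d alpha = D) by (unfold d; rewrite rpow_Rpower by apply Rpower_gt0;
                                     apply Rpower_inv_r; lra).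
  assert (He : rpow e alpha = (1 + b) * D) by (unfold e; rewrite rpow_Rpower by apply Rpower_gt0;
                                               apply Rpower_inv_r; nra).
  assert (H2d : rpow (2 * d) alpha = 2 * b * D).
  { assert (0 < d) by apply Rpower_gt0. rewrite rpow_Rpower by lra.
    rewrite <- Rpower_mult_distr, (Rpower_pred 2) by lra. fold b.
    rewrite <- (rpow_Rpower d) by lra. rewrite Hd. ring. }
  assert (Hmono : forall x y, 0 <= x -> 0 < y -> rpow x alpha <= rpow y alpha -> x <= y).
  { intros x y Hx Hy Hxy. apply Rnot_lt_le. intros Hlt.
    pose proof (rpow_lt_compat alpha y x ltac:(lra) Hlt ltac:(lra)). lra. }
  assert (Hd0 : 0 < d) by apply Rpower_gt0. assert (He0 : 0 < e) by apply Rpower_gt0.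
  exists d, e. repeat split.
  - apply Hmono; [lra | lra |]. rewrite rpow_1_l, Hd. exact HD.
  - apply Hmono; [lra | lra |]. rewrite Hd, He. nra.
  - apply Rnot_le_lt. intros Hle. pose proof (rpow_le_compat alpha (2 * d) e ltac:(lra) Hle). nra.
  - rewrite Hd, He. unfold D. nra.
  - rewrite He, H2d. unfold D. nra.
  - rewrite He. unfold D. nra.
Qed.

Lemma exists_fine_sampling alpha L delta : 1 < alpha -> 0 <= L -> 0 < delta ->
  exists n, (1 <= n)%nat /\ INR n * rpow (L / INR n) alpha <= delta.
Proof.
  intros Halpha HL Hdelta. destruct (Req_dec L 0) as [->|HL0].
  - exists 1%nat. split; [lia|]. rewrite Rdiv_0_l, rpow_0_l. lra.
  - set (s := Rpower (delta / L) (/ (alpha - 1))).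
    assert (Hs : Rpower s (alpha - 1) = delta / L)
      by (apply Rpower_inv_r; [apply Rdiv_lt_0_compat|]; lra).
    assert (Hs0 : 0 < s) by apply Rpower_gt0.
    destruct (INR_unbounded (L / s)) as [n Hn].
    assert (HLs : 0 < L / s) by (apply Rdiv_lt_0_compat; lra).
    assert (HnR : 0 < INR n) by lra.
    exists n. split; [destruct n; [simpl in HnR; lra | lia]|].
    assert (Hstep : L / INR n <= s).
    { apply (Rmult_le_reg_r (INR n)); [lra|]. unfold Rdiv. rewrite Rmult_assoc, Rinv_l by lra.
      apply (Rmult_lt_compat_r s) in Hn; [|lra]. unfold Rdiv in Hn.
      rewrite Rmult_assoc, Rinv_l in Hn by lra. lra. }
    pose proof (rpow_le_linear alpha (L / INR n) s ltac:(lra)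
                  (conj (Rdiv_lt_0_compat L (INR n) ltac:(lra) HnR) Hstep)) as Hlin.
    rewrite Hs in Hlin.
    replace delta with (INR n * (L / INR n * (delta / L))) by (field; lra).
    apply Rmult_le_compat_l; lra.
Qed.

Lemma budget_bounds a C eps m k D E T W : 0 < a < 1 -> 0 < C ->
  eps = a / (100 * (2 * C + 2)) -> m = 2 * k + 2 -> 0 <= k -> 0 <= D ->
  m <= W <= m + 3 * a * m / 100 ->
  2 * D + 2 * m <= E -> E + 2 * m <= T -> E <= C * (2 * m) ->
  (1 + eps) * (E + W) < T /\ (1 + eps) * (2 * D + W) < E /\
  (1 + eps) * (E + W) - E + (1 + eps) * (2 * D + W) - 2 * D - 2 * m < a * (m - k).
Proof.
  intros Ha HC Heps Hm Hk HD HW Hlow Hhigh HEC.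
  assert (Heps0 : 0 < eps) by (rewrite Heps; apply Rdiv_lt_0_compat; nra).
  assert (Hslack : eps * (E + W) <= a * m / 100).
  { apply Rle_trans with (eps * ((2 * C + 2) * m)); [apply Rmult_le_compat_l; nra|].
    rewrite Heps. right. field. lra. }
  assert (eps * (2 * D + W) <= eps * (E + W)) by (apply Rmult_le_compat_l; lra).
  repeat split; nra.
Qed.

Theorem theorem7 (alpha : R) (Halpha : 1 < alpha) : ~ has_SAS alpha.
Proof.
  intros Hsas.
  destruct (exists_small_gap alpha Halpha) as (a & Ha & Hra).
  destruct (exists_two_scales alpha Halpha) as (C & HC & Hscales).
  set (eps := a / (100 * (2 * C + 2))).
  assert (Heps : 0 < eps) by (apply Rdiv_lt_0_compat; lra).
  destruct (Hsas eps Heps) as (k & A & Hcorrect & Hstable & Happrox).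
  set (m := (2 * k + 2)%nat).
  assert (Hm : INR m = 2 * INR k + 2) by (unfold m; rewrite plus_INR, mult_INR; simpl; ring).
  pose proof (pos_INR k) as Hk.
  destruct (Hscales (2 * INR m) ltac:(lra)) as (d & e & Hd & Hde & He & Hlow & Hhigh & HeC).
  destruct (exists_fine_sampling alpha (xR a e m + 2 * d) (a * INR m / 300) Halpha
              ltac:(pose proof (xR_ge a e m (proj1 Ha)); lra) ltac:(apply Rdiv_lt_0_compat; nra))
    as (n & Hn & Hfine).
  pose proof (track_cost_bounds alpha a e d m n Halpha (proj1 Ha) (proj2 Ha) Hd Hde Hn Hra
                ltac:(lia) Hfine) as HW.
  destruct (budget_bounds a C eps (INR m) (INR k) (rpow d alpha) (rpow e alpha)
              (rpow (2 * d) alpha) (track_cost alpha a e d m n) Ha HC eq_refl Hm Hk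
              (rpow_ge0 d alpha) HW ltac:(lra) ltac:(lra) ltac:(lra)) as (Hbig & Hsmall & Hroom).
  pose proof (stable_update_bound alpha a e d m n Halpha (proj1 Ha) (proj2 Ha) Hd Hde He Hn
                A k eps Hcorrect Hstable Happrox ltac:(lra) Hbig Hsmall).
  lra.
Qed.
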